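(* Fix $l^0_{jk},l^0_{ki},l^0_{ij}>0$ and let $\mathcal{W}^{ijk}$ be the set of $(w_i,w_j,w_k)\in\mathbb{R}^3$ for which $l_{ab}>0$ defined by $\cosh\frac{l_{ab}}{2}=e^{w_a+w_b}\cosh\frac{l^0_{ab}}{2}$ exist for $ab\in\{jk,ki,ij\}$. For $(w_i,w_j,w_k)\in\mathcal{W}^{ijk}$, let $\theta^i_{jk},\theta^j_{ki},\theta^k_{ij}$ be the lengths of the sides opposite to the sides of lengths $l_{jk},l_{ki},l_{ij}$ in the hyperbolic right-angled hexagon whose three pairwise non-adjacent sides have lengths $l_{jk},l_{ki},l_{ij}$. Then the Jacobian matrix $\frac{\partial(\theta^i_{jk},\theta^j_{ki},\theta^k_{ij})}{\partial(w_i,w_j,w_k)}$ is symmetric.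
   Context: For any three positive numbers there is a hyperbolic right-angled hexagon, unique up to isometry, whose three pairwise non-adjacent sides have these lengths. *)

From Stdlib Require Import Reals Lra.
From Coquelicot Require Import Coquelicot.
Open Scope R_scope.

(** Points of R^{2,1} (Minkowski space), coordinates (x0,x1,x2). *)
Definition pt := (R * R * R)%type.

Definition mink (x y : pt) : R :=
  let '(x0, x1, x2) := x in let '(y0, y1, y2) := y in
  - x0 * y0 + x1 * y1 + x2 * y2.

(** Hyperboloid model of the hyperbolic plane. *)
Definition in_H (x : pt) : Prop :=
  let '(x0, _, _) := x in mink x x = -1 /\ 0 < x0.

Definition det3 (x y z : pt) : R :=
  let '(x0, x1, x2) := x in let '(y0, y1, y2) := y in let '(z0, z1, z2) := z in
  x0 * (y1 * z2 - y2 * z1) - x1 * (y0 * z2 - y2 * z0) + x2 * (y0 * z1 - y1 * z0).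

(** Tangent vector at p (in H) of the geodesic from p towards q: q + <p,q> p. *)
Definition tangent (p q : pt) : pt :=
  let '(p0, p1, p2) := p in let '(q0, q1, q2) := q in
  let c := mink p q in (q0 + c * p0, q1 + c * p1, q2 + c * p2).

Definition hdist_is (p q : pt) (L : R) : Prop :=
  0 <= L /\ cosh L = - mink p q.

(** Vertices of a hexagon P 0, ..., P 5 (indices taken mod 6);
    side a is the geodesic segment from P a to P (a+1). *)
Definition nxt (a : nat) : nat := ((a + 1) mod 6)%nat.
Definition prv (a : nat) : nat := ((a + 5) mod 6)%nat.

(** A (convex) hyperbolic right-angled hexagon: six points of H, forming a
    strictly convex polygon (for each side, all other vertices lie strictly on
    the same side of the geodesic line through it, with a consistent
    orientation), with a right angle at every vertex. *)
Definition right_angled_hexagon (P : nat -> pt) : Prop :=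
  (forall a, (a < 6)%nat -> in_H (P a)) /\
  (forall a, (a < 6)%nat ->
     mink (tangent (P a) (P (prv a))) (tangent (P a) (P (nxt a))) = 0) /\
  ((forall a b, (a < 6)%nat -> (b < 6)%nat -> b <> a -> b <> nxt a ->
      0 < det3 (P a) (P (nxt a)) (P b)) \/
   (forall a b, (a < 6)%nat -> (b < 6)%nat -> b <> a -> b <> nxt a ->
      det3 (P a) (P (nxt a)) (P b) < 0)).

Definition side_length (P : nat -> pt) (a : nat) (L : R) : Prop :=
  hdist_is (P a) (P (nxt a)) L.

Definition new_length (l0 wa wb l : R) : Prop :=
  0 < l /\ cosh (l / 2) = exp (wa + wb) * cosh (l0 / 2).

Definition in_W (l0jk l0ki l0ij wi wj wk : R) : Prop :=
  (exists l, new_length l0jk wj wk l) /\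
  (exists l, new_length l0ki wk wi l) /\
  (exists l, new_length l0ij wi wj l).

Definition partial_fun (f : R -> R -> R -> R) (b : nat) (wi wj wk : R) : R -> R :=
  match b with
  | O => fun t => f t wj wk
  | 1%nat => fun t => f wi t wk
  | _ => fun t => f wi wj t
  end.

Definition coord (b : nat) (wi wj wk : R) : R :=
  match b with O => wi | 1%nat => wj | _ => wk end.

Definition has_jacobian (F : nat -> R -> R -> R -> R) (wi wj wk : R) : Prop :=
  forall a b, (a < 3)%nat -> (b < 3)%nat ->
    ex_derive (partial_fun (F a) b wi wj wk) (coord b wi wj wk).

Definition jacobian (F : nat -> R -> R -> R -> R) (wi wj wk : R) (a b : nat) : R :=
  Derive (partial_fun (F a) b wi wj wk) (coord b wi wj wk).

Definition jacobian_symmetric (F : nat -> R -> R -> R -> R) (wi wj wk : R) : Prop :=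
  has_jacobian F wi wj wk /\
  forall a b, (a < 3)%nat -> (b < 3)%nat ->
    jacobian F wi wj wk a b = jacobian F wi wj wk b a.

Definition theta3 (thi thj thk : R -> R -> R -> R) (a : nat) : R -> R -> R -> R :=
  match a with O => thi | 1%nat => thj | _ => thk end.

(* In the hyperboloid model the side lines of a right-angled hexagon p0 ... p5
   have spacelike normals n_a = p_a x p_(a+1) with <n_a, n_a> = sinh^2 l_a,
   and the right angles make consecutive normals orthogonal.  Binet-Cauchy
   identities for the Minkowski cross product then give the hexagon cosine law
     cosh l3 sinh l2 sinh l4 = cosh l2 cosh l4 + cosh l0,
   the sign being fixed by the convexity (a consistent orientation) of the
   hexagon.  So theta_i = arccosh ((B C + A) / sqrt ((B^2 - 1) (C^2 - 1))) with
   A = cosh l_jk = 2 e^(2 (w_j + w_k)) cosh^2 (l0_jk / 2) - 1, etc., whence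
   dA/dw_j = 2 (A + 1), and differentiating gives the closed form
     d theta_i / d w_j = 2 (C - A - B - 1) / ((C - 1) sqrt (A^2 + B^2 + C^2 + 2ABC - 1)),
   which is symmetric in A and B, i.e. equal to d theta_j / d w_i. *)

From Stdlib Require Import Reals Lra Lia Psatz.
From Coquelicot Require Import Coquelicot.
Open Scope R_scope.

Definition mcross (x y : pt) : pt :=
  let '(x0, x1, x2) := x in let '(y0, y1, y2) := y in
  (x2 * y1 - x1 * y2, x2 * y0 - x0 * y2, x0 * y1 - x1 * y0).

Ltac expand_pts := repeat match goal with p : pt |- _ => destruct p as [[? ?] ?] end; simpl.

Lemma mink_sym x y : mink x y = mink y x.
Proof. expand_pts; ring. Qed.

Lemma mink_mcross x y z : mink (mcross x y) z = det3 x y z.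
Proof. expand_pts; ring. Qed.

Lemma mink_mcross_mcross x y z w :
  mink (mcross x y) (mcross z w) = mink x w * mink y z - mink x z * mink y w.
Proof. expand_pts; ring. Qed.

Lemma det3_swap23 x y z : det3 x z y = - det3 x y z.
Proof. expand_pts; ring. Qed.

Lemma det3_mcross x y z w :
  det3 (mcross x y) (mcross y z) (mcross z w) = - (det3 x y z * det3 y z w).
Proof. expand_pts; ring. Qed.

Lemma mcross_mcross_chain x y z w :
  mink (mcross (mcross x y) (mcross y z)) (mcross (mcross y z) (mcross z w))
  = det3 x y z * det3 y z w * mink y z.
Proof. expand_pts; ring. Qed.

Lemma det3_sq_gram x y z : det3 x y z ^ 2 =
  - (mink x x * (mink y y * mink z z - mink y z ^ 2)
     - mink x y * (mink x y * mink z z - mink y z * mink x z)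
     + mink x z * (mink x y * mink y z - mink y y * mink x z)).
Proof. expand_pts; ring. Qed.

(* A vector n orthogonal to a and b is a multiple of mcross a b. *)
Lemma mink_orthogonal_det a b n w : mink a n = 0 -> mink b n = 0 ->
  mink n n * det3 a b w = det3 a b n * mink n w.
Proof.
  intros Ha Hb.
  assert (I : mink n n * det3 a b w - det3 a b n * mink n w
              = - mink a n * det3 b n w + mink b n * det3 a n w) by (expand_pts; ring).
  rewrite Ha, Hb in I; lra.
Qed.

Lemma normals_cosine_law n1 n2 n3 n4 n5 s1 s2 s3 s4 s5 c0 c2 c3 c4 :
  0 < s1 -> 0 < s2 -> 0 < s3 -> 0 < s4 -> 0 < s5 ->
  mink n2 n2 = s2 ^ 2 -> mink n3 n3 = s3 ^ 2 -> mink n4 n4 = s4 ^ 2 ->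
  mink n1 n2 = 0 -> mink n2 n3 = 0 -> mink n3 n4 = 0 -> mink n4 n5 = 0 ->
  mink n1 n3 = - (s1 * s3 * c2) -> mink n3 n5 = - (s3 * s5 * c4) ->
  mink n1 n5 = - (s1 * s5 * c0) -> mink n2 n4 = - (s2 * s4 * c3) ->
  det3 n1 n2 n3 = - (s1 * s2 ^ 2 * s3) -> det3 n3 n4 n5 = - (s3 * s4 ^ 2 * s5) ->
  c3 * (s2 * s4) = c2 * c4 + c0.
Proof.
  intros h1 h2 h3 h4 h5 N2 N3 N4 O12 O23 O34 O45 M13 M35 M15 M24 D123 D345.
  set (Z := det3 n3 n5 n2).
  assert (E1 : s2 ^ 2 * - (s1 * s3 ^ 2 * s5 * (c2 * c4 + c0)) = s1 * s2 ^ 2 * s3 * Z).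
  { pose proof (mink_orthogonal_det n1 n3 n2 (mcross n3 n5) O12 (eq_trans (mink_sym _ _) O23))
      as E.
    rewrite <- mink_mcross, mink_mcross_mcross, det3_swap23, D123, N2, N3, M13, M35, M15,
      (mink_sym n2), mink_mcross in E.
    fold Z in E. lra. }
  assert (E2 : s4 ^ 2 * Z = s3 * s4 ^ 2 * s5 * - (s2 * s4 * c3)).
  { pose proof (mink_orthogonal_det n3 n5 n4 n2 O34 (eq_trans (mink_sym _ _) O45)) as E.
    rewrite (det3_swap23 n3 n4 n5), D345, N4, (mink_sym n4), M24 in E.
    fold Z in E. lra. }
  assert (K : 0 < s1 * s2 ^ 2 * s3 ^ 2 * s4 ^ 2 * s5) by
    (repeat apply Rmult_lt_0_compat; lra).
  apply (Rmult_eq_reg_l (s1 * s2 ^ 2 * s3 ^ 2 * s4 ^ 2 * s5)); [|lra].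
  assert (E3 : s4 ^ 2 * (s2 ^ 2 * - (s1 * s3 ^ 2 * s5 * (c2 * c4 + c0)))
               = s1 * s2 ^ 2 * s3 * (s4 ^ 2 * Z)) by (rewrite E1; ring).
  rewrite E2 in E3. lra.
Qed.

Lemma eq_sign_of_sq e d u : e * e = 1 -> 0 < e * d -> 0 <= u -> d ^ 2 = u ^ 2 ->
  d = e * u /\ 0 < u.
Proof.
  intros He Hd Hu Hsq.
  assert (Hf : (d - e * u) * (d + e * u) = 0).
  { replace ((d - e * u) * (d + e * u)) with (d ^ 2 - (e * e) * u ^ 2) by ring.
    rewrite He, Hsq; ring. }
  assert (Hpos : 0 < e * (d + e * u)).
  { replace (e * (d + e * u)) with (e * d + (e * e) * u) by ring. rewrite He; lra. }
  apply Rmult_integral in Hf as [Hf | Hf]; [|rewrite Hf in Hpos; lra].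
  assert (Hdu : d = e * u) by lra.
  split; [exact Hdu|]. rewrite Hdu, <- Rmult_assoc, He in Hd; lra.
Qed.

Section RightCorner.
Variables (p q r : pt) (c c' s s' : R).
Hypotheses (Hp : mink p p = -1) (Hq : mink q q = -1) (Hr : mink r r = -1).
Hypotheses (Hpq : mink p q = - c) (Hqr : mink q r = - c') (Hpr : mink p r = - (c * c')).
Hypotheses (Hs : s ^ 2 = c ^ 2 - 1) (Hs' : s' ^ 2 = c' ^ 2 - 1).

Lemma corner_det e : 0 <= s -> 0 <= s' -> e * e = 1 -> 0 < e * det3 p q r ->
  det3 p q r = e * (s * s') /\ 0 < s * s'.
Proof.
  intros Hs0 Hs'0 He Ho. apply eq_sign_of_sq; auto; [nra|].
  rewrite det3_sq_gram, Hp, Hq, Hr, Hpq, Hqr, Hpr.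
  replace ((s * s') ^ 2) with (s ^ 2 * s' ^ 2) by ring. rewrite Hs, Hs'. ring.
Qed.

Lemma mcross_corner_orthogonal : mink (mcross p q) (mcross q r) = 0.
Proof. rewrite mink_mcross_mcross, Hq, Hpq, Hqr, Hpr. ring. Qed.

End RightCorner.

Lemma mcross_norm p q c s : mink p p = -1 -> mink q q = -1 -> mink p q = - c ->
  s ^ 2 = c ^ 2 - 1 -> mink (mcross p q) (mcross p q) = s ^ 2.
Proof.
  intros Hp Hq Hpq Hs. rewrite mink_mcross_mcross, (mink_sym q p), Hp, Hq, Hpq, Hs. ring.
Qed.

Lemma mcross_skip_mink p q r t c s s' s'' e :
  mink (mcross p q) (mcross q r) = 0 -> mink (mcross q r) (mcross r t) = 0 ->
  mink q r = - c -> mink (mcross q r) (mcross q r) = s' ^ 2 -> 0 < s' ->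
  e * e = 1 -> det3 p q r = e * (s * s') -> det3 q r t = e * (s' * s'') ->
  mink (mcross p q) (mcross r t) = - (s * s'' * c).
Proof.
  intros O1 O2 Hc Hn Hs' He D1 D2.
  pose proof (mcross_mcross_chain p q r t) as E.
  rewrite mink_mcross_mcross, O1, O2, Hn, D1, D2, Hc in E.
  replace (e * (s * s') * (e * (s' * s'')) * - c)
    with (- ((e * e) * (s * s'' * c)) * s' ^ 2) in E by ring.
  rewrite He in E. apply (Rmult_eq_reg_r (s' ^ 2)); [lra | nra].
Qed.

Section HexagonCosineLaw.
Variables (p0 p1 p2 p3 p4 p5 : pt) (c0 c1 c2 c3 c4 c5 s0 s1 s2 s3 s4 s5 e : R).
Hypotheses (H0 : mink p0 p0 = -1) (H1 : mink p1 p1 = -1) (H2 : mink p2 p2 = -1)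
  (H3 : mink p3 p3 = -1) (H4 : mink p4 p4 = -1) (H5 : mink p5 p5 = -1).
Hypotheses (E0 : mink p0 p1 = - c0) (E1 : mink p1 p2 = - c1) (E2 : mink p2 p3 = - c2)
  (E3 : mink p3 p4 = - c3) (E4 : mink p4 p5 = - c4) (E5 : mink p5 p0 = - c5).
Hypotheses (R0 : mink p5 p1 = - (c5 * c0)) (R1 : mink p0 p2 = - (c0 * c1))
  (R2 : mink p1 p3 = - (c1 * c2)) (R3 : mink p2 p4 = - (c2 * c3))
  (R4 : mink p3 p5 = - (c3 * c4)) (R5 : mink p4 p0 = - (c4 * c5)).
Hypotheses (S0 : 0 <= s0) (S1 : 0 <= s1) (S2 : 0 <= s2)
  (S3 : 0 <= s3) (S4 : 0 <= s4) (S5 : 0 <= s5).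
Hypotheses (Q0 : s0 ^ 2 = c0 ^ 2 - 1) (Q1 : s1 ^ 2 = c1 ^ 2 - 1) (Q2 : s2 ^ 2 = c2 ^ 2 - 1)
  (Q3 : s3 ^ 2 = c3 ^ 2 - 1) (Q4 : s4 ^ 2 = c4 ^ 2 - 1) (Q5 : s5 ^ 2 = c5 ^ 2 - 1).
Hypotheses (He : e * e = 1)
  (O0 : 0 < e * det3 p0 p1 p2) (O1 : 0 < e * det3 p1 p2 p3) (O2 : 0 < e * det3 p2 p3 p4)
  (O3 : 0 < e * det3 p3 p4 p5) (O4 : 0 < e * det3 p4 p5 p0) (O5 : 0 < e * det3 p5 p0 p1).

Lemma hexagon_cosine_law_points : c3 * (s2 * s4) = c2 * c4 + c0.
Proof.
  destruct (corner_det p0 p1 p2 c0 c1 s0 s1 H0 H1 H2 E0 E1 R1 Q0 Q1 e S0 S1 He O0) as [D0 P0].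
  destruct (corner_det p1 p2 p3 c1 c2 s1 s2 H1 H2 H3 E1 E2 R2 Q1 Q2 e S1 S2 He O1) as [D1 P1].
  destruct (corner_det p2 p3 p4 c2 c3 s2 s3 H2 H3 H4 E2 E3 R3 Q2 Q3 e S2 S3 He O2) as [D2 P2].
  destruct (corner_det p3 p4 p5 c3 c4 s3 s4 H3 H4 H5 E3 E4 R4 Q3 Q4 e S3 S4 He O3) as [D3 P3].
  destruct (corner_det p4 p5 p0 c4 c5 s4 s5 H4 H5 H0 E4 E5 R5 Q4 Q5 e S4 S5 He O4) as [D4 P4].
  destruct (corner_det p5 p0 p1 c5 c0 s5 s0 H5 H0 H1 E5 E0 R0 Q5 Q0 e S5 S0 He O5) as [D5 P5].
  assert (s0p : 0 < s0) by nra. assert (s1p : 0 < s1) by nra. assert (s2p : 0 < s2) by nra.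
  assert (s3p : 0 < s3) by nra. assert (s4p : 0 < s4) by nra. assert (s5p : 0 < s5) by nra.
  pose proof (mcross_corner_orthogonal p0 p1 p2 c0 c1 H1 E0 E1 R1) as T0.
  pose proof (mcross_corner_orthogonal p1 p2 p3 c1 c2 H2 E1 E2 R2) as T1.
  pose proof (mcross_corner_orthogonal p2 p3 p4 c2 c3 H3 E2 E3 R3) as T2.
  pose proof (mcross_corner_orthogonal p3 p4 p5 c3 c4 H4 E3 E4 R4) as T3.
  pose proof (mcross_corner_orthogonal p4 p5 p0 c4 c5 H5 E4 E5 R5) as T4.
  pose proof (mcross_corner_orthogonal p5 p0 p1 c5 c0 H0 E5 E0 R0) as T5.
  pose proof (mcross_norm p0 p1 c0 s0 H0 H1 E0 Q0) as N0.
  pose proof (mcross_norm p2 p3 c2 s2 H2 H3 E2 Q2) as N2.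
  pose proof (mcross_norm p3 p4 c3 s3 H3 H4 E3 Q3) as N3.
  pose proof (mcross_norm p4 p5 c4 s4 H4 H5 E4 Q4) as N4.
  apply (normals_cosine_law (mcross p1 p2) (mcross p2 p3) (mcross p3 p4) (mcross p4 p5)
           (mcross p5 p0) s1 s2 s3 s4 s5); auto.
  - exact (mcross_skip_mink p1 p2 p3 p4 c2 s1 s2 s3 e T1 T2 E2 N2 s2p He D1 D2).
  - exact (mcross_skip_mink p3 p4 p5 p0 c4 s3 s4 s5 e T3 T4 E4 N4 s4p He D3 D4).
  - rewrite mink_sym.
    replace (s1 * s5 * c0) with (s5 * s1 * c0) by ring.
    exact (mcross_skip_mink p5 p0 p1 p2 c0 s5 s0 s1 e T5 T0 E0 N0 s0p He D5 D0).
  - exact (mcross_skip_mink p2 p3 p4 p5 c3 s2 s3 s4 e T2 T3 E3 N3 s3p He D2 D3).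
  - rewrite det3_mcross, D1, D2.
    replace (- (e * (s1 * s2) * (e * (s2 * s3)))) with (- ((e * e) * (s1 * s2 ^ 2 * s3))) by ring.
    rewrite He; ring.
  - rewrite det3_mcross, D3, D4.
    replace (- (e * (s3 * s4) * (e * (s4 * s5)))) with (- ((e * e) * (s3 * s4 ^ 2 * s5))) by ring.
    rewrite He; ring.
Qed.

End HexagonCosineLaw.

Lemma exp_mul_exp_opp x : exp x * exp (- x) = 1.
Proof. rewrite <- exp_plus, Rplus_opp_r. apply exp_0. Qed.

Lemma cosh_pos x : 0 < cosh x.
Proof. unfold cosh. pose proof (exp_pos x). pose proof (exp_pos (- x)). lra. Qed.

Lemma sinh_sq x : sinh x ^ 2 = cosh x ^ 2 - 1.
Proof. unfold sinh, cosh. pose proof (exp_mul_exp_opp x). nra. Qed.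

Lemma sinh_nonneg x : 0 <= x -> 0 <= sinh x.
Proof. intros [Hx | <-]; [left; rewrite <- sinh_0; apply sinh_lt | rewrite sinh_0]; lra. Qed.

Lemma cosh_gt1 x : 0 < x -> 1 < cosh x.
Proof.
  intro Hx. assert (0 < sinh x) by (rewrite <- sinh_0; apply sinh_lt; exact Hx).
  pose proof (sinh_sq x). pose proof (cosh_pos x). nra.
Qed.

Lemma cosh_double x : cosh (2 * x) = 2 * cosh x ^ 2 - 1.
Proof.
  unfold cosh. replace (2 * x) with (x + x) by ring. replace (- (x + x)) with (- x + - x) by ring.
  rewrite !exp_plus. pose proof (exp_mul_exp_opp x). nra.
Qed.

Lemma tangent_mink p q r : mink p p = -1 ->
  mink (tangent p q) (tangent p r) = mink q r + mink p q * mink p r.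
Proof.
  intro Hp.
  transitivity (mink q r + 2 * (mink p q * mink p r) + mink p q * mink p r * mink p p).
  - expand_pts; ring.
  - rewrite Hp; ring.
Qed.

Lemma right_angled_hexagon_vertex P a : right_angled_hexagon P -> (a < 6)%nat ->
  mink (P a) (P a) = -1 /\
  mink (P (prv a)) (P (nxt a)) = - (mink (P (prv a)) (P a) * mink (P a) (P (nxt a))).
Proof.
  intros [HH [HR _]] Ha.
  assert (Hp : forall b, (b < 6)%nat -> mink (P b) (P b) = -1).
  { intros b Hb. specialize (HH b Hb). destruct (P b) as [[? ?] ?]. apply HH. }
  split; [auto|].
  pose proof (HR a Ha) as R. rewrite tangent_mink, (mink_sym (P a) (P (prv a))) in R by auto.
  lra.
Qed.

Lemma right_angled_hexagon_orientation P : right_angled_hexagon P ->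
  exists e, e * e = 1 /\
    forall a, (a < 6)%nat -> 0 < e * det3 (P a) (P (nxt a)) (P (nxt (nxt a))).
Proof.
  intros [_ [_ HO]].
  assert (Hn : forall a, (a < 6)%nat ->
            (nxt (nxt a) < 6)%nat /\ nxt (nxt a) <> a /\ nxt (nxt a) <> nxt a).
  { intros a Ha. unfold nxt. do 6 (destruct a as [|a]; [cbn; lia|]). lia. }
  destruct HO as [HO | HO]; [exists 1 | exists (-1)]; split; try ring;
    intros a Ha; destruct (Hn a Ha) as (Hb & Hb1 & Hb2); specialize (HO a _ Ha Hb Hb1 Hb2); lra.
Qed.

Lemma hexagon_cosine_law P l0 l1 l2 l3 l4 l5 : right_angled_hexagon P ->
  side_length P 0 l0 -> side_length P 1 l1 -> side_length P 2 l2 ->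
  side_length P 3 l3 -> side_length P 4 l4 -> side_length P 5 l5 ->
  cosh l3 * (sinh l2 * sinh l4) = cosh l2 * cosh l4 + cosh l0 /\
  cosh l5 * (sinh l4 * sinh l0) = cosh l4 * cosh l0 + cosh l2 /\
  cosh l1 * (sinh l0 * sinh l2) = cosh l0 * cosh l2 + cosh l4.
Proof.
  intros Hhex [L0 C0] [L1 C1] [L2 C2] [L3 C3] [L4 C4] [L5 C5].
  destruct (right_angled_hexagon_orientation P Hhex) as [e [He HO]].
  destruct (right_angled_hexagon_vertex P 0 Hhex ltac:(lia)) as [H0 R0].
  destruct (right_angled_hexagon_vertex P 1 Hhex ltac:(lia)) as [H1 R1].
  destruct (right_angled_hexagon_vertex P 2 Hhex ltac:(lia)) as [H2 R2].
  destruct (right_angled_hexagon_vertex P 3 Hhex ltac:(lia)) as [H3 R3].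
  destruct (right_angled_hexagon_vertex P 4 Hhex ltac:(lia)) as [H4 R4].
  destruct (right_angled_hexagon_vertex P 5 Hhex ltac:(lia)) as [H5 R5].
  pose proof (HO 0%nat ltac:(lia)) as O0. pose proof (HO 1%nat ltac:(lia)) as O1.
  pose proof (HO 2%nat ltac:(lia)) as O2. pose proof (HO 3%nat ltac:(lia)) as O3.
  pose proof (HO 4%nat ltac:(lia)) as O4. pose proof (HO 5%nat ltac:(lia)) as O5.
  clear HO; unfold nxt, prv in *; cbn in *.
  assert (E0 : mink (P 0%nat) (P 1%nat) = - cosh l0) by lra.
  assert (E1 : mink (P 1%nat) (P 2%nat) = - cosh l1) by lra.
  assert (E2 : mink (P 2%nat) (P 3%nat) = - cosh l2) by lra.
  assert (E3 : mink (P 3%nat) (P 4%nat) = - cosh l3) by lra.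
  assert (E4 : mink (P 4%nat) (P 5%nat) = - cosh l4) by lra.
  assert (E5 : mink (P 5%nat) (P 0%nat) = - cosh l5) by lra.
  rewrite E5, E0 in R0; rewrite E0, E1 in R1; rewrite E1, E2 in R2;
  rewrite E2, E3 in R3; rewrite E3, E4 in R4; rewrite E4, E5 in R5.
  rewrite Rmult_opp_opp in R0, R1, R2, R3, R4, R5.
  pose proof (sinh_sq l0) as Q0. pose proof (sinh_sq l1) as Q1. pose proof (sinh_sq l2) as Q2.
  pose proof (sinh_sq l3) as Q3. pose proof (sinh_sq l4) as Q4. pose proof (sinh_sq l5) as Q5.
  apply sinh_nonneg in L0, L1, L2, L3, L4, L5.
  split; [|split].
  - apply (hexagon_cosine_law_points (P 0%nat) (P 1%nat) (P 2%nat) (P 3%nat) (P 4%nat) (P 5%nat)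
      (cosh l0) (cosh l1) (cosh l2) (cosh l3) (cosh l4) (cosh l5)
      (sinh l0) (sinh l1) (sinh l2) (sinh l3) (sinh l4) (sinh l5) e); auto.
  - apply (hexagon_cosine_law_points (P 2%nat) (P 3%nat) (P 4%nat) (P 5%nat) (P 0%nat) (P 1%nat)
      (cosh l2) (cosh l3) (cosh l4) (cosh l5) (cosh l0) (cosh l1)
      (sinh l2) (sinh l3) (sinh l4) (sinh l5) (sinh l0) (sinh l1) e); auto.
  - apply (hexagon_cosine_law_points (P 4%nat) (P 5%nat) (P 0%nat) (P 1%nat) (P 2%nat) (P 3%nat)
      (cosh l4) (cosh l5) (cosh l0) (cosh l1) (cosh l2) (cosh l3)
      (sinh l4) (sinh l5) (sinh l0) (sinh l1) (sinh l2) (sinh l3) e); auto.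
Qed.

Definition acosh (x : R) : R := ln (x + sqrt (x ^ 2 - 1)).

Lemma cosh_acosh x : 1 <= x -> cosh (acosh x) = x.
Proof.
  intro Hx. unfold acosh, cosh.
  assert (Hs : 0 <= sqrt (x ^ 2 - 1)) by apply sqrt_pos.
  assert (Hs2 : sqrt (x ^ 2 - 1) ^ 2 = x ^ 2 - 1) by (apply pow2_sqrt; nra).
  rewrite exp_Ropp, exp_ln by lra. field_simplify; [rewrite Hs2; field |]; lra.
Qed.

Lemma acosh_cosh x : 0 <= x -> acosh (cosh x) = x.
Proof.
  intro Hx. unfold acosh.
  rewrite <- sinh_sq, sqrt_pow2 by (apply sinh_nonneg; exact Hx).
  replace (cosh x + sinh x) with (exp x) by (unfold cosh, sinh; field).
  apply ln_exp.
Qed.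

Lemma acosh_pos x : 1 < x -> 0 < acosh x.
Proof.
  intro Hx. unfold acosh. rewrite <- ln_1.
  pose proof (sqrt_pos (x ^ 2 - 1)). apply ln_increasing; lra.
Qed.

Lemma is_derive_acosh x : 1 < x -> is_derive acosh x (/ sqrt (x ^ 2 - 1)).
Proof.
  intro Hx. unfold acosh.
  assert (Hs : 0 < sqrt (x ^ 2 - 1)) by (apply sqrt_lt_R0; nra).
  auto_derive; replace (x * (x * 1) + - (1)) with (x ^ 2 - 1) by ring.
  - repeat split; nra.
  - field; lra.
Qed.

Definition opposite_side (X Y Z : R) : R :=
  acosh ((Y * Z + X) / (sqrt (Y ^ 2 - 1) * sqrt (Z ^ 2 - 1))).

Lemma opposite_side_of_cosine_law th la lb lc : 0 <= th -> 0 < lb -> 0 < lc ->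
  cosh th * (sinh lb * sinh lc) = cosh lb * cosh lc + cosh la ->
  th = opposite_side (cosh la) (cosh lb) (cosh lc).
Proof.
  intros Hth Hb Hc Hlaw. unfold opposite_side.
  assert (0 < sinh lb) by (rewrite <- sinh_0; apply sinh_lt; exact Hb).
  assert (0 < sinh lc) by (rewrite <- sinh_0; apply sinh_lt; exact Hc).
  rewrite <- !sinh_sq, !sqrt_pow2 by lra.
  replace ((cosh lb * cosh lc + cosh la) / (sinh lb * sinh lc)) with (cosh th)
    by (rewrite <- Hlaw; field; lra).
  symmetry; apply acosh_cosh; exact Hth.
Qed.

Definition hexagon_disc (X Y Z : R) : R := X ^ 2 + Y ^ 2 + Z ^ 2 + 2 * X * Y * Z - 1.

Definition opposite_side_deriv (X Y Z dX dY dZ : R) : R :=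
  (dX + dY * Z + Y * dZ - (Y * Z + X) * (Y * dY / (Y ^ 2 - 1) + Z * dZ / (Z ^ 2 - 1)))
  / sqrt (hexagon_disc X Y Z).

Lemma hexagon_disc_pos X Y Z : 1 < X -> 1 < Y -> 1 < Z -> 0 < hexagon_disc X Y Z.
Proof.
  intros HX HY HZ. unfold hexagon_disc.
  assert (0 < X * Y * Z) by (apply Rmult_lt_0_compat; [apply Rmult_lt_0_compat|]; lra).
  nra.
Qed.

Lemma opposite_side_arg_sq X Y Z : 1 < Y -> 1 < Z ->
  ((Y * Z + X) / (sqrt (Y ^ 2 - 1) * sqrt (Z ^ 2 - 1))) ^ 2 - 1
  = hexagon_disc X Y Z / ((Y ^ 2 - 1) * (Z ^ 2 - 1)).
Proof.
  intros HY HZ.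
  assert (sY : sqrt (Y ^ 2 - 1) ^ 2 = Y ^ 2 - 1) by (apply pow2_sqrt; nra).
  assert (sZ : sqrt (Z ^ 2 - 1) ^ 2 = Z ^ 2 - 1) by (apply pow2_sqrt; nra).
  assert (0 < sqrt (Y ^ 2 - 1)) by (apply sqrt_lt_R0; nra).
  assert (0 < sqrt (Z ^ 2 - 1)) by (apply sqrt_lt_R0; nra).
  replace (((Y * Z + X) / (sqrt (Y ^ 2 - 1) * sqrt (Z ^ 2 - 1))) ^ 2)
    with ((Y * Z + X) ^ 2 / (sqrt (Y ^ 2 - 1) ^ 2 * sqrt (Z ^ 2 - 1) ^ 2)) by (field; lra).
  rewrite sY, sZ. unfold hexagon_disc. field. split; nra.
Qed.

Lemma is_derive_opposite_side (a b c : R -> R) t da db dc :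
  is_derive a t da -> is_derive b t db -> is_derive c t dc ->
  1 < a t -> 1 < b t -> 1 < c t ->
  is_derive (fun x => opposite_side (a x) (b x) (c x)) t
    (opposite_side_deriv (a t) (b t) (c t) da db dc).
Proof.
  intros Ha Hb Hc HA HB HC.
  set (u := fun x => (b x * c x + a x) / (sqrt (b x ^ 2 - 1) * sqrt (c x ^ 2 - 1))).
  assert (sB : 0 < sqrt (b t ^ 2 - 1)) by (apply sqrt_lt_R0; nra).
  assert (sC : 0 < sqrt (c t ^ 2 - 1)) by (apply sqrt_lt_R0; nra).
  assert (sB2 : sqrt (b t ^ 2 - 1) ^ 2 = b t ^ 2 - 1) by (apply pow2_sqrt; nra).
  assert (sC2 : sqrt (c t ^ 2 - 1) ^ 2 = c t ^ 2 - 1) by (apply pow2_sqrt; nra).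
  assert (Hu : is_derive u t
    ((da + db * c t + b t * dc
      - (b t * c t + a t) * (b t * db / (b t ^ 2 - 1) + c t * dc / (c t ^ 2 - 1)))
     / (sqrt (b t ^ 2 - 1) * sqrt (c t ^ 2 - 1)))).
  { unfold u. auto_derive;
      replace (b t * (b t * 1) + - (1)) with (b t ^ 2 - 1) by ring;
      replace (c t * (c t * 1) + - (1)) with (c t ^ 2 - 1) by ring.
    - repeat split; try (eexists; eassumption); nra.
    - replace (Derive (fun x => a x) t) with da by (symmetry; now apply is_derive_unique).
      replace (Derive (fun x => b x) t) with db by (symmetry; now apply is_derive_unique).
      replace (Derive (fun x => c x) t) with dc by (symmetry; now apply is_derive_unique).
      set (sb := sqrt (b t ^ 2 - 1)) in *. set (sc := sqrt (c t ^ 2 - 1)) in *.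
      rewrite <- sB2, <- sC2. field. lra. }
  pose proof (opposite_side_arg_sq (a t) (b t) (c t) HB HC) as Hsq. fold (u t) in Hsq.
  pose proof (hexagon_disc_pos _ _ _ HA HB HC) as HD.
  assert (Hu1 : 1 < u t).
  { assert (0 < u t) by (apply Rdiv_lt_0_compat; [nra | apply Rmult_lt_0_compat; assumption]).
    assert (0 < u t ^ 2 - 1)
      by (rewrite Hsq; apply Rdiv_lt_0_compat; [lra | apply Rmult_lt_0_compat; nra]).
    nra. }
  pose proof (is_derive_comp acosh u t _ _ (is_derive_acosh _ Hu1) Hu) as Hcomp.
  set (N := da + db * c t + b t * dc
            - (b t * c t + a t) * (b t * db / (b t ^ 2 - 1) + c t * dc / (c t ^ 2 - 1))) in *.
  replace (opposite_side_deriv (a t) (b t) (c t) da db dc)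
    with (N / (sqrt (b t ^ 2 - 1) * sqrt (c t ^ 2 - 1)) * / sqrt (u t ^ 2 - 1));
    [exact Hcomp|].
  unfold opposite_side_deriv; fold N.
  rewrite Hsq, sqrt_div_alt, sqrt_mult_alt by (try apply Rmult_lt_0_compat; nra).
  assert (0 < sqrt (hexagon_disc (a t) (b t) (c t))) by (apply sqrt_lt_R0; exact HD).
  field; repeat split; lra.
Qed.

Definition cosh_length (k x y : R) : R := 2 * (exp (x + y) * k) ^ 2 - 1.

Lemma cosh_length_gt1 k x y : 1 < exp (x + y) * k -> 1 < cosh_length k x y.
Proof. unfold cosh_length. nra. Qed.

Lemma is_derive_cosh_length_l k x y :
  is_derive (fun t => cosh_length k t y) x (2 * (cosh_length k x y + 1)).
Proof. unfold cosh_length. auto_derive; auto. ring. Qed.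

Lemma is_derive_cosh_length_r k x y :
  is_derive (fun t => cosh_length k x t) y (2 * (cosh_length k x y + 1)).
Proof. unfold cosh_length. auto_derive; auto. ring. Qed.

Lemma locally_gt_of_ex_derive (f : R -> R) x a : ex_derive f x -> a < f x ->
  locally x (fun t => a < f t).
Proof. intros Hd Ha. apply (ex_derive_continuous f x Hd (fun u => a < u)), open_gt, Ha. Qed.

Definition admissible (k1 k2 k3 wi wj wk : R) : Prop :=
  1 < exp (wj + wk) * k1 /\ 1 < exp (wk + wi) * k2 /\ 1 < exp (wi + wj) * k3.

Lemma admissible_rotate k1 k2 k3 wi wj wk :
  admissible k1 k2 k3 wi wj wk -> admissible k2 k3 k1 wj wk wi.
Proof. unfold admissible; tauto. Qed.

Lemma admissible_locally k1 k2 k3 wi wj wk : admissible k1 k2 k3 wi wj wk ->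
  locally wi (fun t => admissible k1 k2 k3 t wj wk) /\
  locally wj (fun t => admissible k1 k2 k3 wi t wk) /\
  locally wk (fun t => admissible k1 k2 k3 wi wj t).
Proof.
  unfold admissible. intros (H1 & H2 & H3).
  repeat split; repeat apply filter_and; apply locally_gt_of_ex_derive; auto; auto_derive; auto.
Qed.

Definition theta_of (k1 k2 k3 wi wj wk : R) : R :=
  opposite_side (cosh_length k1 wj wk) (cosh_length k2 wk wi) (cosh_length k3 wi wj).

Definition dtheta (k1 k2 k3 wi wj wk : R) (b : nat) : R :=
  let A := cosh_length k1 wj wk in
  let B := cosh_length k2 wk wi in
  let C := cosh_length k3 wi wj in
  match b with
  | O => opposite_side_deriv A B C 0 (2 * (B + 1)) (2 * (C + 1))
  | 1%nat => opposite_side_deriv A B C (2 * (A + 1)) 0 (2 * (C + 1))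
  | _ => opposite_side_deriv A B C (2 * (A + 1)) (2 * (B + 1)) 0
  end.

Lemma theta_partials k1 k2 k3 (th : R -> R -> R -> R) wi wj wk :
  (forall x y z, admissible k1 k2 k3 x y z -> th x y z = theta_of k1 k2 k3 x y z) ->
  admissible k1 k2 k3 wi wj wk ->
  is_derive (fun t => th t wj wk) wi (dtheta k1 k2 k3 wi wj wk 0) /\
  is_derive (fun t => th wi t wk) wj (dtheta k1 k2 k3 wi wj wk 1) /\
  is_derive (fun t => th wi wj t) wk (dtheta k1 k2 k3 wi wj wk 2).
Proof.
  intros Hth Hw.
  destruct (admissible_locally _ _ _ _ _ _ Hw) as (Li & Lj & Lk).
  destruct Hw as (H1 & H2 & H3).
  apply cosh_length_gt1 in H1, H2, H3.
  split; [|split].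
  - apply (is_derive_ext_loc (fun t => theta_of k1 k2 k3 t wj wk)).
    + eapply filter_imp; [intros t Ht; symmetry; exact (Hth _ _ _ Ht) | exact Li].
    + apply (is_derive_opposite_side (fun _ => cosh_length k1 wj wk)
               (fun t => cosh_length k2 wk t) (fun t => cosh_length k3 t wj)); auto.
      * exact (is_derive_const _ _).
      * apply is_derive_cosh_length_r.
      * apply is_derive_cosh_length_l.
  - apply (is_derive_ext_loc (fun t => theta_of k1 k2 k3 wi t wk)).
    + eapply filter_imp; [intros t Ht; symmetry; exact (Hth _ _ _ Ht) | exact Lj].
    + apply (is_derive_opposite_side (fun t => cosh_length k1 t wk)
               (fun _ => cosh_length k2 wk wi) (fun t => cosh_length k3 wi t)); auto.
      * apply is_derive_cosh_length_l.
      * exact (is_derive_const _ _).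
      * apply is_derive_cosh_length_r.
  - apply (is_derive_ext_loc (fun t => theta_of k1 k2 k3 wi wj t)).
    + eapply filter_imp; [intros t Ht; symmetry; exact (Hth _ _ _ Ht) | exact Lk].
    + apply (is_derive_opposite_side (fun t => cosh_length k1 wj t)
               (fun t => cosh_length k2 t wi) (fun _ => cosh_length k3 wi wj)); auto.
      * apply is_derive_cosh_length_r.
      * apply is_derive_cosh_length_l.
      * exact (is_derive_const _ _).
Qed.

Lemma dtheta_swap k1 k2 k3 wi wj wk : admissible k1 k2 k3 wi wj wk ->
  dtheta k1 k2 k3 wi wj wk 1 = dtheta k2 k3 k1 wj wk wi 2.
Proof.
  intros (H1 & H2 & H3). apply cosh_length_gt1 in H1, H2, H3.
  unfold dtheta, opposite_side_deriv.
  set (X := cosh_length k1 wj wk) in *. set (Y := cosh_length k2 wk wi) in *.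
  set (Z := cosh_length k3 wi wj) in *.
  replace (hexagon_disc Y Z X) with (hexagon_disc X Y Z) by (unfold hexagon_disc; ring).
  f_equal. field. split; nra.
Qed.

Lemma new_length_of_admissible l0 x y : 1 < exp (x + y) * cosh (l0 / 2) ->
  new_length l0 x y (2 * acosh (exp (x + y) * cosh (l0 / 2))) /\
  cosh (2 * acosh (exp (x + y) * cosh (l0 / 2))) = cosh_length (cosh (l0 / 2)) x y.
Proof.
  intro H. pose proof (cosh_acosh _ (Rlt_le _ _ H)) as Hc.
  split; [split|].
  - pose proof (acosh_pos _ H). lra.
  - replace (2 * acosh (exp (x + y) * cosh (l0 / 2)) / 2)
      with (acosh (exp (x + y) * cosh (l0 / 2))) by field.
    rewrite Hc. ring.
  - rewrite cosh_double, Hc. reflexivity.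
Qed.

Lemma admissible_of_new_length l0 x y l : new_length l0 x y l -> 1 < exp (x + y) * cosh (l0 / 2).
Proof. intros [Hl Hc]. rewrite <- Hc. apply cosh_gt1. lra. Qed.

Section OppositeSides.
Variables (l0jk l0ki l0ij : R) (thi thj thk : R -> R -> R -> R).
Hypothesis Hhex : forall wi wj wk ljk lki lij,
  new_length l0jk wj wk ljk -> new_length l0ki wk wi lki -> new_length l0ij wi wj lij ->
  exists P : nat -> pt,
    right_angled_hexagon P /\
    side_length P 0 ljk /\ side_length P 2 lki /\ side_length P 4 lij /\
    side_length P 3 (thi wi wj wk) /\ side_length P 5 (thj wi wj wk) /\
    side_length P 1 (thk wi wj wk).

Lemma opposite_sides_eq_theta x y z :
  admissible (cosh (l0jk / 2)) (cosh (l0ki / 2)) (cosh (l0ij / 2)) x y z ->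
  thi x y z = theta_of (cosh (l0jk / 2)) (cosh (l0ki / 2)) (cosh (l0ij / 2)) x y z /\
  thj x y z = theta_of (cosh (l0ki / 2)) (cosh (l0ij / 2)) (cosh (l0jk / 2)) y z x /\
  thk x y z = theta_of (cosh (l0ij / 2)) (cosh (l0jk / 2)) (cosh (l0ki / 2)) z x y.
Proof.
  intros (H1 & H2 & H3).
  destruct (new_length_of_admissible l0jk y z H1) as [N1 C1].
  destruct (new_length_of_admissible l0ki z x H2) as [N2 C2].
  destruct (new_length_of_admissible l0ij x y H3) as [N3 C3].
  destruct (Hhex x y z _ _ _ N1 N2 N3) as (P & HP & S0 & S2 & S4 & S3 & S5 & S1).
  destruct (hexagon_cosine_law P _ _ _ _ _ _ HP S0 S1 S2 S3 S4 S5) as (L3 & L5 & L1).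
  unfold theta_of. rewrite <- C1, <- C2, <- C3.
  destruct N1 as [P1 _], N2 as [P2 _], N3 as [P3 _], S3 as [T3 _], S5 as [T5 _], S1 as [T1 _].
  split; [|split]; apply opposite_side_of_cosine_law; assumption.
Qed.

End OppositeSides.

Lemma jacobian_symmetric_of_is_derive (F : nat -> R -> R -> R -> R) (J : nat -> nat -> R)
  wi wj wk :
  (forall a b, (a < 3)%nat -> (b < 3)%nat ->
     is_derive (partial_fun (F a) b wi wj wk) (coord b wi wj wk) (J a b)) ->
  (forall a b, (a < 3)%nat -> (b < 3)%nat -> J a b = J b a) ->
  jacobian_symmetric F wi wj wk.
Proof.
  intros HD HJ. split.
  - intros a b Ha Hb. exists (J a b). exact (HD a b Ha Hb).
  - intros a b Ha Hb. unfold jacobian.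
    rewrite (is_derive_unique _ _ _ (HD a b Ha Hb)), (is_derive_unique _ _ _ (HD b a Hb Ha)).
    exact (HJ a b Ha Hb).
Qed.

Theorem lemma2 (l0jk l0ki l0ij : R) (thi thj thk : R -> R -> R -> R) :
  0 < l0jk -> 0 < l0ki -> 0 < l0ij ->
  (forall wi wj wk ljk lki lij,
     new_length l0jk wj wk ljk -> new_length l0ki wk wi lki ->
     new_length l0ij wi wj lij ->
     exists P : nat -> pt,
       right_angled_hexagon P /\
       side_length P 0 ljk /\ side_length P 2 lki /\ side_length P 4 lij /\
       side_length P 3 (thi wi wj wk) /\ side_length P 5 (thj wi wj wk) /\
       side_length P 1 (thk wi wj wk)) ->
  forall wi wj wk, in_W l0jk l0ki l0ij wi wj wk ->
    jacobian_symmetric (theta3 thi thj thk) wi wj wk.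
Proof.
  (* cosh (l0 / 2) >= 1 for every l0. *)
  intros _ _ _ Hhex wi wj wk ((ljk & Njk) & (lki & Nki) & (lij & Nij)).
  pose proof (opposite_sides_eq_theta _ _ _ _ _ _ Hhex) as Hth.
  set (k1 := cosh (l0jk / 2)) in *. set (k2 := cosh (l0ki / 2)) in *.
  set (k3 := cosh (l0ij / 2)) in *.
  assert (Hw : admissible k1 k2 k3 wi wj wk)
    by (repeat split; eapply admissible_of_new_length; eassumption).
  destruct (theta_partials k1 k2 k3 thi wi wj wk) as (Di0 & Di1 & Di2); auto.
  { intros x y z Hxyz. apply (Hth x y z Hxyz). }
  destruct (theta_partials k2 k3 k1 (fun x y z => thj z x y) wj wk wi) as (Dj1 & Dj2 & Dj0);
    auto using admissible_rotate.
  { intros x y z Hxyz. apply (Hth z x y), admissible_rotate, admissible_rotate, Hxyz. }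
  destruct (theta_partials k3 k1 k2 (fun x y z => thk y z x) wk wi wj) as (Dk2 & Dk0 & Dk1);
    auto using admissible_rotate.
  { intros x y z Hxyz. apply (Hth y z x), admissible_rotate, Hxyz. }
  apply (jacobian_symmetric_of_is_derive _ (fun a b => match a with
    | O => dtheta k1 k2 k3 wi wj wk b
    | 1%nat => dtheta k2 k3 k1 wj wk wi ((b + 2) mod 3)
    | _ => dtheta k3 k1 k2 wk wi wj ((b + 1) mod 3) end)).
  - intros [|[|[|a]]] [|[|[|b]]] Ha Hb; try lia; assumption.
  - intros [|[|[|a]]] [|[|[|b]]] Ha Hb; try lia; cbn; try reflexivity;
      first [apply dtheta_swap | symmetry; apply dtheta_swap]; auto using admissible_rotate.
Qed.
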